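(* Let $G=(V,E)$ be any finite connected graph. Then for all $n \ge 2$ there exists a 1-resilient asynchronous algorithm for $n$ processes communicating through single-writer atomic snapshot objects (equivalently, read/write registers) that solves graphical approximate agreement on $G$.
   Context: Graphical approximate agreement on $G$ (known to all processes): each process $p_i$ receives an input vertex $x_i\in V$ and each non-crashed process outputs $y_i\in V$ such that any two outputs are equal or adjacent in $G$ and every output lies on a shortest path in $G$ between two (not necessarily distinct) inputs. An algorithm is 1-resilient if, in every execution in which at most one process crashes, every non-crashed process eventually outputs and the outputs satisfy the specification. *)

From mathcomp Require Import all_boot.
Unset Printing Implicit Defensive.

(* A graph on a finite vertex type V is a symmetric irreflexive relation e. *)

(* p is (the list of vertices after x of) a path in G from x to y. *)
Definition path_between {V : eqType} (e : rel V) (x y : V) (p : seq V) : bool :=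
  path e x p && (last x p == y).

Definition shortest_path {V : eqType} (e : rel V) (x y : V) (p : seq V) : Prop :=
  path_between e x y p /\ forall q, path_between e x y q -> size p <= size q.

Definition on_shortest_path {V : eqType} (e : rel V) (x y z : V) : Prop :=
  exists p, shortest_path e x y p /\ z \in x :: p.

(* A local step of a process: update its own snapshot component with a value
   and move to a new state; take an atomic snapshot of the whole memory
   (None = component never written) and move to a state depending on it;
   or output (decide) a vertex, after which it takes no further effect. *)
Inductive action (n : nat) (S Val V : Type) : Type :=
| AUpdate of Val & S
| ASnap of (('I_n -> option Val) -> S)
| ADecide of V.

Record algorithm (n : nat) (V : Type) := Algorithm {
  st : Type;
  rv : Type;                          (* values stored in snapshot components *)
  init : 'I_n -> V -> st;
  act : st -> action n st rv V
}.
Arguments st {n V}. Arguments rv {n V}. Arguments init {n V}. Arguments act {n V}.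
Arguments AUpdate {n S Val V}. Arguments ASnap {n S Val V}. Arguments ADecide {n S Val V}.

Definition upd {n : nat} {T : Type} (f : 'I_n -> T) (i : 'I_n) (x : T) : 'I_n -> T :=
  fun j => if j == i then x else f j.

Definition config {n : nat} {V : Type} (A : algorithm n V) : Type :=
  (('I_n -> st A) * ('I_n -> option (rv A)))%type.

Definition step {n : nat} {V : Type} (A : algorithm n V) (i : 'I_n)
  (c : config A) : config A :=
  let: (ls, mem) := c in
  match @act n V A (ls i) with
  | AUpdate v s => (upd ls i s, upd mem i (Some v))
  | ASnap k => (upd ls i (k mem), mem)
  | ADecide _ => (ls, mem)
  end.

Fixpoint run {n : nat} {V : Type} (A : algorithm n V) (x : 'I_n -> V)
  (sch : nat -> 'I_n) (t : nat) : config A :=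
  match t with
  | 0 => (fun i => @init n V A i (x i), fun _ => None)
  | t'.+1 => step A (sch t') (@run n V A x sch t')
  end.

Definition output {n : nat} {V : Type} (A : algorithm n V) (s : st A) : option V :=
  match @act n V A s with ADecide y => Some y | _ => None end.

(* Process i takes infinitely many steps (i.e. does not crash). *)
Definition inf_often {n : nat} (sch : nat -> 'I_n) (i : 'I_n) : Prop :=
  forall N, exists t, N <= t /\ sch t = i.

Definition at_most_one_crash {n : nat} (sch : nat -> 'I_n) : Prop :=
  forall i j : 'I_n, i != j -> inf_often sch i \/ inf_often sch j.

Definition solves_GAA_1resilient {V : finType} (e : rel V) {n : nat}
  (A : algorithm n V) : Prop :=
  forall (x : 'I_n -> V) (sch : nat -> 'I_n), at_most_one_crash sch ->
    (forall i, inf_often sch i ->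
       exists t y, output A ((run A x sch t).1 i) = Some y) /\
    (forall t1 t2 i j y1 y2,
       output A ((run A x sch t1).1 i) = Some y1 ->
       output A ((run A x sch t2).1 j) = Some y2 ->
       y1 = y2 \/ e y1 y2) /\
    (forall t i y, output A ((run A x sch t).1 i) = Some y ->
       exists j k, on_shortest_path e (x j) (x k) y).

From mathcomp Require Import all_boot zify.
From Stdlib Require Import IndefiniteDescription.
Set Implicit Arguments. Unset Strict Implicit. Unset Printing Implicit Defensive.

(* Processes 0 and 1 are leaders, all others are followers.  Fix a shortest
   path between the leaders' inputs a and b.  The leaders walk along it towards
   each other, one vertex per round: a leader writes its input and step count,
   then scans its partner's register.  It decides its own input if the partner
   has not written yet, copies the partner's decision if there is one, decides
   its current vertex once the two walkers are at most one step apart, and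
   otherwise advances.  A follower repeatedly scans both leader registers and
   adopts the first decision it sees.  Every decision is announced in the
   register before the process outputs.

   Safety rests on an invariant
   of the two leaders ([pair_inv]): walkers never cross, own decisions are the
   current vertex, copied decisions are the partner's own decision, and two
   own decisions are at most one step apart.  Together with the fact that
   followers only adopt leader decisions ([Inv]), this gives validity (all
   outputs lie on the chosen shortest path from a to b) and agreement.
   Termination follows from a potential that strictly decreases at each step
   of a leader: since at most one process crashes, some leader decides, and
   then every correct follower decides at its next scan. *)

Lemma step_state n W (A : algorithm n W) j (c : config A) k :
  (step A j c).1 k =
  if k == j then match act A (c.1 j) with
                 | AUpdate _ s => s | ASnap f => f c.2 | ADecide _ => c.1 j end
  else c.1 k.
Proof.
case: c => ls mem; rewrite /step /=.
by case: (act A (ls j)) => [v s|f|y] /=; rewrite /upd; case: eqP => // ->.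
Qed.

Lemma step_mem n W (A : algorithm n W) j (c : config A) k :
  (step A j c).2 k =
  if k == j then match act A (c.1 j) with AUpdate v _ => Some v | _ => c.2 j end
  else c.2 k.
Proof.
case: c => ls mem; rewrite /step /=.
by case: (act A (ls j)) => [v s|f|y] /=; rewrite /upd; case: eqP => // ->.
Qed.

Lemma output_act n W (A : algorithm n W) s y :
  output A s = Some y -> act A s = ADecide y.
Proof. by rewrite /output; case: (act A s) => // y' [->]. Qed.

(* A process that has output keeps its state, hence its output, forever. *)
Lemma output_later n W (A : algorithm n W) x sch t t' i y :
  output A ((run A x sch t).1 i) = Some y -> t <= t' ->
  output A ((run A x sch t').1 i) = Some y.
Proof.
move=> Hy /subnK <-; elim: (t' - t) => [//|d IH].
rewrite addSn /= step_state; case: eqP => [<-|//].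
by rewrite (output_act IH).
Qed.

(* Vertices joined by some path are joined by a shortest path: the least
   length of a path exists, as having a path of length k is decidable (there
   are finitely many k-tuples of vertices). *)
Lemma shortest_path_exists (V : finType) (e : rel V) a b :
  connect e a b -> exists p, shortest_path e a b p.
Proof.
move=> /connectP [p Hp Hlast].
pose P k := [exists t : k.-tuple V, path_between e a b t].
have HP : exists k, P k.
  by exists (size p); apply/existsP; exists (in_tuple p); rewrite /path_between Hp -Hlast eqxx.
case: (ex_minnP HP) => k /existsP [t Ht] Hmin.
exists t; split=> // q Hq; rewrite size_tuple; apply: Hmin.
by apply/existsP; exists (in_tuple q).
Qed.

Lemma shortest_path_fun (V : finType) (e : rel V) :
  (forall u v : V, connect e u v) ->
  exists sp : V -> V -> seq V, forall a b, shortest_path e a b (sp a b).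
Proof.
move=> Hcon.
exists (fun a b => proj1_sig (constructive_indefinite_description _
                     (shortest_path_exists (Hcon a b)))).
by move=> a b; case: constructive_indefinite_description.
Qed.

Section ShortestPaths.
Variables (V : finType) (e : rel V) (sp : V -> V -> seq V).
Hypothesis sp_shortest : forall a b, shortest_path e a b (sp a b).

Definition dist a b := size (sp a b).
Definition walk a b k := nth a (a :: sp a b) k.

Lemma walk_valid a b k : k <= dist a b -> on_shortest_path e a b (walk a b k).
Proof.
move=> Hk; exists (sp a b); split; first exact: sp_shortest.
by rewrite /walk mem_nth //= ltnS.
Qed.

Lemma walk_dist a b : walk a b (dist a b) = b.
Proof.
have [/andP [_ /eqP Hlast] _] := sp_shortest a b.
exact: etrans (nth_last a (a :: sp a b)) Hlast.
Qed.

Lemma walk_close a b k l : k <= l <= k.+1 -> l <= dist a b ->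
  walk a b k = walk a b l \/ e (walk a b k) (walk a b l).
Proof.
case/andP=> Hkl Hlk Hl; have [->|Hne] := eqVneq k l; first by left.
have -> : l = k.+1 by lia.
have [/andP [Hp _] _] := sp_shortest a b.
by right; apply: (pathP a Hp); rewrite /dist in Hl; lia.
Qed.
End ShortestPaths.

Section Algorithm.
Variables (V : finType) (e : rel V) (sp : V -> V -> seq V).
Hypothesis sp_shortest : forall a b, shortest_path e a b (sp a b).
Variable m : nat.
Local Notation n := m.+2.
Local Notation dst := (dist sp).
Local Notation walk := (walk sp).

(* Phases of a process.  A [bool] flag on a decision records whether it was
   copied from the partner's register (true) or computed locally (false). *)
Inductive phase := Write | Scan | Announce of V & bool | Done of V & bool | Follow.
(* Register contents: the input and step count of a walking leader, or a
   decision. *)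
Inductive reg := RPos of V & nat | RDec of V.
(* [role] is false for leader 0 (walking from its input a towards b) and true
   for leader 1 (walking from b towards a); [loc] counts the steps walked. *)
Record pstate := PState { role : bool; inp : V; loc : nat; ph : phase }.
Definition set_phase s p := PState (role s) (inp s) (loc s) p.

Definition leader0 : 'I_n := ord0.
Definition leader1 : 'I_n := Ordinal (isT : 1 < n).
Definition partner (r : bool) := if r then leader0 else leader1.

Definition after_scan (s : pstate) (o : option reg) : pstate :=
  match o with
  | None => set_phase s (Announce (inp s) false)
  | Some (RDec y) => set_phase s (Announce y true)
  | Some (RPos x' l') =>
      let a := if role s then x' else inp s in
      let b := if role s then inp s else x' in
      if dst a b <= loc s + l' + 1 then
        set_phase s (Announce (walk a b (if role s then dst a b - loc s else loc s)) false)
      else PState (role s) (inp s) (loc s).+1 Write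
  end.

Definition follow_scan (o0 o1 : option reg) : phase :=
  match o0, o1 with
  | Some (RDec y), _ | _, Some (RDec y) => Done y false
  | _, _ => Follow
  end.

Definition alg_act (s : pstate) : action n pstate reg V :=
  match ph s with
  | Write => AUpdate (RPos (inp s) (loc s)) (set_phase s Scan)
  | Scan => ASnap (fun mem => after_scan s (mem (partner (role s))))
  | Announce y c => AUpdate (RDec y) (set_phase s (Done y c))
  | Done y _ => ADecide y
  | Follow => ASnap (fun mem => set_phase s (follow_scan (mem leader0) (mem leader1)))
  end.

Definition alg_init (i : 'I_n) (xi : V) : pstate :=
  if i == leader0 then PState false xi 0 Write
  else if i == leader1 then PState true xi 0 Write
  else PState false xi 0 Follow.

Definition Alg : algorithm n V := @Algorithm n V pstate reg alg_init alg_act.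

Definition leader_state (s : pstate) (w' : option reg) : pstate :=
  match ph s with
  | Write => set_phase s Scan
  | Scan => after_scan s w'
  | Announce y c => set_phase s (Done y c)
  | _ => s
  end.

Definition leader_reg (s : pstate) (w : option reg) : option reg :=
  match ph s with
  | Write => Some (RPos (inp s) (loc s))
  | Announce y _ => Some (RDec y)
  | _ => w
  end.

Lemma leader_step s (mem : 'I_n -> option reg) w : ph s <> Follow ->
  (match alg_act s with AUpdate _ s' => s' | ASnap f => f mem | ADecide _ => s end)
    = leader_state s (mem (partner (role s))) /\
  (match alg_act s with AUpdate v _ => Some v | _ => w end) = leader_reg s w.
Proof. by case: s => r x l []. Qed.

Section PairInvariant.
Variables (a b : V).
Local Notation D := (dst a b).

Definition input_of (r : bool) := if r then b else a.
(* Index on the walk from a to b of a leader of role r after l steps. *)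
Definition position (r : bool) l := if r then D - l else l.

(* The register w of a leader in state s reflects its last write. *)
Definition reg_ok s w := match ph s with
  | Write => (loc s = 0 /\ w = None) \/ (0 < loc s /\ w = Some (RPos (inp s) (loc s).-1))
  | Scan | Announce _ _ => w = Some (RPos (inp s) (loc s))
  | Done y _ => w = Some (RDec y)
  | Follow => False
  end.

Definition decision p := match p with Announce y c | Done y c => Some (y, c) | _ => None end.

Definition leader_inv r s w s' (w' : option reg) :=
  [/\ role s = r /\ inp s = input_of r, reg_ok s w, (w' = None -> loc s = 0),
      (forall y, decision (ph s) = Some (y, false) -> y = walk a b (position r (loc s))) &
      (forall y, decision (ph s) = Some (y, true) -> ph s' = Done y false)].

Definition pair_bounds s s' := loc s + loc s' <= D /\
  (forall y y', decision (ph s) = Some (y, false) -> decision (ph s') = Some (y', false) ->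
     D <= loc s + loc s' + 1).

Definition pair_inv r s w s' w' :=
  [/\ leader_inv r s w s' w', leader_inv (~~ r) s' w' s w & pair_bounds s s'].

Lemma pair_inv_swap r s w s' w' : pair_inv r s w s' w' -> pair_inv (~~ r) s' w' s w.
Proof.
case=> H H' [Hsum Hclose]; split; rewrite ?negbK //; split; first by rewrite addnC.
by move=> y y' Hy Hy'; rewrite (addnC (loc s')); apply: Hclose Hy' Hy.
Qed.

Lemma reg_ok_pos s x l : reg_ok s (Some (RPos x l)) ->
  x = inp s /\ l <= loc s <= l.+1.
Proof.
rewrite /reg_ok; case: (ph s) => [||y c|y c|] //.
- by case=> [[_ //]|[Hl [-> ->]]]; split => //; lia.
- by case=> -> ->; split => //; lia.
- by case=> -> ->; split => //; lia.
Qed.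

Lemma reg_ok_dec s y : reg_ok s (Some (RDec y)) -> exists c, ph s = Done y c.
Proof.
rewrite /reg_ok; case: (ph s) => [||y' c|y' c|] //; first by case=> [[]|[]].
by case=> <-; exists c.
Qed.

Lemma reg_ok_none s : reg_ok s None -> ph s = Write.
Proof. by rewrite /reg_ok; case: (ph s). Qed.

Lemma pair_inv_scan r s w s' w' : ph s = Scan -> pair_inv r s w s' w' ->
  pair_inv r (after_scan s w') w s' w'.
Proof.
case: s => r0 x0 l ph0 /= ->.
case=> [[[/= -> ->] /= -> H0 _ _] [[Hr' Hx'] Hreg' H0' Hown' Hcopy'] [Hsum Hclose]] /=.
case: w' Hreg' H0' Hown' Hcopy' H0 Hclose => [[x' l'|y]|] Hreg' H0' Hown' Hcopy' H0 Hclose.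
- have [Ex Hl'] := reg_ok_pos Hreg'; subst x'; rewrite /after_scan /=.
  have -> : (if r then inp s' else input_of r) = a by rewrite Hx'; case: (r).
  have -> : (if r then input_of r else inp s') = b by rewrite Hx'; case: (r).
  case: ifP => Hd; split; split => //=; try by move=> y /Hcopy'.
  + by move=> y [<-]; case: (r).
  + by move=> y y' _ _; lia.
  + by right; split.
  + lia.
- have [c' Hs'] := reg_ok_dec Hreg'.
  have Hc' : c' = false by case: c' Hs' => // Hs'; move: (Hcopy' y); rewrite Hs' => /(_ erefl).
  subst c'; split; split => //=; last by move=> y' /Hcopy'.
  by move=> y' [<-].
- have El : l = 0 by apply: H0.
  subst l; have Hs'W := reg_ok_none Hreg'.
  split; split => //=; try by move=> y /Hcopy'.
  + by move=> y [<-]; case: (r); rewrite //= subn0 (walk_dist sp_shortest).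
  + by move=> y y' _; rewrite Hs'W.
Qed.

Lemma pair_inv_step r s w s' w' : pair_inv r s w s' w' ->
  pair_inv r (leader_state s w') (leader_reg s w) s' w'.
Proof.
move=> HI; have [[[Hr Hx] Hreg H0 Hown Hcopy] [Hr' Hreg' H0' Hown' Hcopy'] [Hsum Hclose]] := HI.
rewrite /leader_state /leader_reg.
case Hph: (ph s) Hreg Hown Hcopy Hclose => [||y c|y c|] //= Hreg Hown Hcopy Hclose.
- by split; split => //= y /Hcopy'; rewrite Hph.
- exact: pair_inv_scan Hph HI.
- by split; split => //= y' /Hcopy'; rewrite Hph.
Qed.

Lemma own_decision_valid r s w s' w' y : leader_inv r s w s' w' -> loc s <= D ->
  decision (ph s) = Some (y, false) -> on_shortest_path e a b y.
Proof.
case=> _ _ _ Hown _ Hloc /Hown ->.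
by apply: (walk_valid sp_shortest); rewrite /position; case: (r); lia.
Qed.

Lemma decision_valid r s w s' w' y c : pair_inv r s w s' w' ->
  decision (ph s) = Some (y, c) -> on_shortest_path e a b y.
Proof.
case=> Hs Hs' [Hsum _]; case: c => Hd; last by apply: (own_decision_valid Hs) Hd; lia.
have [_ _ _ _ Hcopy] := Hs.
by apply: (own_decision_valid Hs'); [lia | rewrite (Hcopy y Hd)].
Qed.

Lemma done_close s0 w0 s1 w1 y0 c0 y1 c1 : pair_inv false s0 w0 s1 w1 ->
  ph s0 = Done y0 c0 -> ph s1 = Done y1 c1 -> y0 = y1 \/ e y0 y1.
Proof.
case=> [[_ _ _ Hown0 Hcopy0] [_ _ _ Hown1 Hcopy1] [Hsum Hclose]] H0 H1.
case: c0 H0 => H0.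
  by move: (Hcopy0 y0); rewrite H0 H1 => /(_ erefl) [->]; left.
case: c1 H1 => H1.
  by move: (Hcopy1 y1); rewrite H0 H1 => /(_ erefl) [->]; left.
have -> : y0 = walk a b (position false (loc s0)) by apply: Hown0; rewrite H0.
have -> : y1 = walk a b (position true (loc s1)) by apply: Hown1; rewrite H1.
have Hl := Hclose y0 y1; rewrite H0 H1 in Hl; have {}Hl := Hl erefl erefl.
by rewrite /position; apply: (walk_close sp_shortest); lia.
Qed.
End PairInvariant.

Lemma step_self c k : ph (c.1 k) <> Follow ->
  (step Alg k c).1 k = leader_state (c.1 k) (c.2 (partner (role (c.1 k)))) /\
  (step Alg k c).2 k = leader_reg (c.1 k) (c.2 k).
Proof. by move=> Hk; rewrite step_state step_mem eqxx; exact: leader_step. Qed.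

Lemma step_other c j k : k != j ->
  (step Alg j c).1 k = c.1 k /\ (step Alg j c).2 k = c.2 k.
Proof. by move/negPf=> Hkj; rewrite step_state step_mem Hkj. Qed.

Lemma step_done c j k y b : ph (c.1 k) = Done y b -> (step Alg j c).1 k = c.1 k.
Proof. by move=> Hk; rewrite step_state; case: eqP => // <-; rewrite /= /alg_act Hk. Qed.

Lemma after_scan_cases s o :
  (exists y c, after_scan s o = set_phase s (Announce y c)) \/
  after_scan s o = PState (role s) (inp s) (loc s).+1 Write.
Proof.
case: o => [[x' l'|y]|] /=; try by left; do 2 eexists.
by case: ifP => _; [left; do 2 eexists | right].
Qed.

Section Run.
Variable x : 'I_n -> V.
Local Notation a := (x leader0).
Local Notation b := (x leader1).
Local Notation D := (dst a b).

Definition leader_decided (ls : 'I_n -> pstate) y :=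
  (exists c, ph (ls leader0) = Done y c) \/ (exists c, ph (ls leader1) = Done y c).

Definition follower_inv (ls : 'I_n -> pstate) i :=
  ph (ls i) = Follow \/ exists y c, ph (ls i) = Done y c /\ leader_decided ls y.

Definition leaders_inv (c : config Alg) :=
  pair_inv a b false (c.1 leader0) (c.2 leader0) (c.1 leader1) (c.2 leader1).

Definition Inv (c : config Alg) :=
  leaders_inv c /\ forall i, i != leader0 -> i != leader1 -> follower_inv c.1 i.

Lemma leader_reg_ok c k : leaders_inv c -> k = leader0 \/ k = leader1 ->
  reg_ok (c.1 k) (c.2 k).
Proof. by case=> [[_ R0 _ _ _] [_ R1 _ _ _] _] [] ->. Qed.

Lemma leader_not_follow c k : leaders_inv c -> k = leader0 \/ k = leader1 ->
  ph (c.1 k) <> Follow.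
Proof. by move=> HI /(leader_reg_ok HI); rewrite /reg_ok => /[swap] ->. Qed.

(* Any step preserves the pair invariant; for a leader's own step this is
   [pair_inv_step], used for leader 1 through the symmetry [pair_inv_swap]. *)
Lemma leaders_inv_step c j : leaders_inv c -> leaders_inv (step Alg j c).
Proof.
move=> HI; have [[[Hr0 _] _ _ _ _] [[Hr1 _] _ _ _ _] _] := HI.
have N0 := leader_not_follow HI (or_introl erefl).
have N1 := leader_not_follow HI (or_intror erefl).
rewrite /leaders_inv; have [->|Hj0] := eqVneq j leader0.
  have [-> ->] := step_self N0; have [-> ->] := step_other c (isT : leader1 != leader0).
  by rewrite Hr0; exact: pair_inv_step.
have [->|Hj1] := eqVneq j leader1.
  have [-> ->] := step_self N1; have [-> ->] := step_other c (isT : leader0 != leader1).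
  by rewrite Hr1; apply: (pair_inv_swap (r := true)); exact: pair_inv_step (pair_inv_swap HI).
rewrite eq_sym in Hj0; rewrite eq_sym in Hj1.
by have [-> ->] := step_other c Hj0; have [-> ->] := step_other c Hj1.
Qed.

Lemma leader_decided_step c j y :
  leader_decided c.1 y -> leader_decided (step Alg j c).1 y.
Proof. by case=> [[b' H]|[b' H]]; [left|right]; exists b'; rewrite (step_done _ H). Qed.

Lemma follow_scan_spec (ls : 'I_n -> pstate) w0 w1 :
  reg_ok (ls leader0) w0 -> reg_ok (ls leader1) w1 ->
  follow_scan w0 w1 = Follow \/
  exists y, follow_scan w0 w1 = Done y false /\ leader_decided ls y.
Proof.
move=> R0 R1; case: w0 R0 => [[x0 l0|y0]|] R0.
- case: w1 R1 => [[x1 l1|y1]|] R1; [by left | | by left].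
  by right; exists y1; split=> //; right; exact: reg_ok_dec.
- by right; exists y0; split=> //; left; exact: reg_ok_dec.
- case: w1 R1 => [[x1 l1|y1]|] R1; [by left | | by left].
  by right; exists y1; split=> //; right; exact: reg_ok_dec.
Qed.

Lemma follower_inv_step c j i : Inv c -> i != leader0 -> i != leader1 ->
  follower_inv (step Alg j c).1 i.
Proof.
move=> [HI HF] Hi0 Hi1.
have [<-{j}|Hij] := eqVneq i j; last first.
  rewrite /follower_inv; have [-> _] := step_other c Hij.
  case: (HF i Hi0 Hi1) => [H|[y [b' [H Hy]]]]; first by left.
  by right; exists y, b'; split=> //; exact: leader_decided_step.
case: (HF i Hi0 Hi1) => [Hfol|[y [b' [H Hy]]]]; last first.
  rewrite /follower_inv (step_done _ H); right; exists y, b'.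
  by split=> //; exact: leader_decided_step.
rewrite /follower_inv step_state eqxx /= /alg_act Hfol /=.
have R0 := leader_reg_ok HI (or_introl erefl).
have R1 := leader_reg_ok HI (or_intror erefl).
case: (follow_scan_spec R0 R1) => [->|[y [-> Hy]]]; first by left.
by right; exists y, false; split=> //; exact: leader_decided_step.
Qed.

Lemma Inv_init sch : Inv (run Alg x sch 0).
Proof.
split=> [|i /negPf Hi0 /negPf Hi1]; last by left; rewrite /= /alg_init Hi0 Hi1.
by rewrite /leaders_inv /= /alg_init; split; split=> //=; left.
Qed.

Lemma Inv_run sch t : Inv (run Alg x sch t).
Proof.
elim: t => [|t [HI HF]]; first exact: Inv_init.
split; first exact: leaders_inv_step.
by move=> i; apply: follower_inv_step.
Qed.

Lemma output_done s y : output Alg s = Some y -> exists c, ph s = Done y c.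
Proof. by case: s => r x0 l [||y0 c0|y0 c0|] //= [<-]; exists c0. Qed.

Lemma output_leader_decided c i y : Inv c -> output Alg (c.1 i) = Some y ->
  leader_decided c.1 y.
Proof.
move=> [_ HF] /output_done [b' Hb].
have [Ei|Hi0] := eqVneq i leader0; first by left; exists b'; rewrite -Ei.
have [Ei|Hi1] := eqVneq i leader1; first by right; exists b'; rewrite -Ei.
case: (HF i Hi0 Hi1) => [H|[y' [c' [H Hy]]]]; first by rewrite H in Hb.
by rewrite Hb in H; case: H => ->.
Qed.

Lemma leader_decided_valid c y : Inv c -> leader_decided c.1 y ->
  on_shortest_path e a b y.
Proof.
move=> [HI _] [[b' H]|[b' H]].
- by apply: (decision_valid HI) (_ : _ = Some (y, b')); rewrite H.
- by apply: (decision_valid (pair_inv_swap HI)) (_ : _ = Some (y, b')); rewrite H.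
Qed.

Lemma leader_decided_close c y y' : symmetric e -> Inv c ->
  leader_decided c.1 y -> leader_decided c.1 y' -> y = y' \/ e y y'.
Proof.
move=> esym [HI _] [[b0 H]|[b0 H]] [[b1 H']|[b1 H']].
- by left; rewrite H in H'; case: H'.
- exact: done_close HI H H'.
- by case: (done_close HI H' H) => [->|]; [left | rewrite esym; right].
- by left; rewrite H in H'; case: H'.
Qed.

(* Termination of a correct leader: the potential of a leader never increases,
   decreases at each of its own steps, and vanishes only once it is done. *)
Definition potential s := match ph s with
  | Write => 2 * (D - loc s) + 3
  | Scan => 2 * (D - loc s) + 2
  | Announce _ _ => 1
  | _ => 0
  end.

Lemma potential_step c j k : k = leader0 \/ k = leader1 -> Inv c -> Inv (step Alg j c) ->
  potential ((step Alg j c).1 k) <= potential (c.1 k) /\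
  (j = k -> 0 < potential (c.1 k) -> potential ((step Alg j c).1 k) < potential (c.1 k)).
Proof.
move=> Hk [HI _] [[_ _ [Hsum _]] _].
have Hloc : loc ((step Alg j c).1 k) <= D by case: Hk Hsum => -> /=; lia.
have [Ekj|Hkj] := eqVneq k j; last first.
  by have [-> _] := step_other c Hkj; split=> // Ejk; rewrite Ejk eqxx in Hkj.
subst j; move: Hloc; have [-> _] := step_self (leader_not_follow HI Hk).
rewrite /potential /leader_state.
case: (c.1 k) => r x0 l [||y b'|y b'|]; try by move=> /= Hloc; split => //; lia.
case: (after_scan_cases (PState r x0 l Scan) (c.2 (partner r))) => [[y [b' ->]]|->] /= Hloc;
  by split => //; lia.
Qed.

Lemma potential_later sch k d t : k = leader0 \/ k = leader1 ->
  potential ((run Alg x sch (d + t)).1 k) <= potential ((run Alg x sch t).1 k).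
Proof.
move=> Hk; elim: d => [//|d IH]; rewrite addSn.
by apply: leq_trans IH; case: (potential_step Hk (Inv_run sch (d + t)) (Inv_run sch (d + t).+1)).
Qed.

Lemma potential_zero s : potential s = 0 -> ph s <> Follow ->
  exists y, output Alg s = Some y.
Proof.
rewrite /potential; case: s => r x0 l [||y b'|y b'|] /= Hp Hf; try lia; last by case: Hf.
by exists y.
Qed.

Lemma leader_terminates sch k : k = leader0 \/ k = leader1 -> inf_often sch k ->
  exists t y, output Alg ((run Alg x sch t).1 k) = Some y.
Proof.
move=> Hk Hinf.
suff Hzero : forall v N, potential ((run Alg x sch N).1 k) <= v ->
    exists t, potential ((run Alg x sch t).1 k) = 0.
  have [t Ht] := Hzero _ 0 (leqnn _).
  by exists t; apply: potential_zero Ht (leader_not_follow (Inv_run sch t).1 Hk).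
elim=> [|v IH] N HN; first by exists N; lia.
case: (Hinf N) => t [HNt Hst].
have Ht : potential ((run Alg x sch t).1 k) <= v.+1.
  by apply: leq_trans HN; rewrite -(subnK HNt); apply: potential_later.
have [Ht0|Hpos] := posnP (potential ((run Alg x sch t).1 k)); first by exists t.
apply: (IH t.+1); rewrite -ltnS; apply: leq_trans Ht.
by case: (potential_step Hk (Inv_run sch t) (Inv_run sch t.+1)) => _ /(_ Hst Hpos).
Qed.

Lemma follow_scan_decides w0 w1 y : w0 = Some (RDec y) \/ w1 = Some (RDec y) ->
  exists y', follow_scan w0 w1 = Done y' false.
Proof. by case=> ->; [|case: w0 => [[x' l'|y']|]]; eexists. Qed.

(* With at most one crash some leader is correct and decides; a correct
   follower then adopts a decision at its next scan. *)
Lemma terminates sch : at_most_one_crash sch -> forall i, inf_often sch i ->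
  exists t y, output Alg ((run Alg x sch t).1 i) = Some y.
Proof.
move=> Hcrash i Hi.
have [Ei|Hi0] := eqVneq i leader0; first exact: leader_terminates (or_introl Ei) Hi.
have [Ei|Hi1] := eqVneq i leader1; first exact: leader_terminates (or_intror Ei) Hi.
have [k [Hk Hkinf]] : exists k, (k = leader0 \/ k = leader1) /\ inf_often sch k.
  by case: (Hcrash leader0 leader1 isT) => H;
    [exists leader0 | exists leader1]; split=> //; [left|right].
have [t0 [y0 Hout]] := leader_terminates Hk Hkinf.
have [t [Ht Hst]] := Hi t0.
have [b0 Hdone] := output_done (output_later Hout Ht).
have [HI HF] := Inv_run sch t.
have Hreg : (run Alg x sch t).2 k = Some (RDec y0).
  by move: (leader_reg_ok HI Hk); rewrite /reg_ok Hdone.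
case: (HF i Hi0 Hi1) => [Hfol|[y [b' [Hy _]]]].
- exists t.+1; rewrite [run _ _ _ t.+1]/= step_state Hst eqxx /= /alg_act Hfol /=.
  have Hdec : (run Alg x sch t).2 leader0 = Some (RDec y0) \/
              (run Alg x sch t).2 leader1 = Some (RDec y0).
    by case: Hk Hreg => <-; [left|right].
  by have [y' ->] := follow_scan_decides Hdec; exists y'.
- by exists t, y; rewrite /output /= /alg_act Hy.
Qed.
End Run.

Lemma Alg_solves : symmetric e -> solves_GAA_1resilient e Alg.
Proof.
move=> esym x sch Hcrash; split; [exact: terminates | split].
- move=> t1 t2 i j y1 y2 H1 H2.
  have O1 := output_later H1 (leq_maxl t1 t2).
  have O2 := output_later H2 (leq_maxr t1 t2).
  have I := Inv_run x sch (maxn t1 t2).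
  exact: leader_decided_close esym I (output_leader_decided I O1) (output_leader_decided I O2).
- move=> t i y H; exists leader0, leader1.
  have I := Inv_run x sch t.
  exact: leader_decided_valid I (output_leader_decided I H).
Qed.
End Algorithm.

Unset Implicit Arguments.

Theorem mainTheorem6 :
  forall (V : finType) (e : rel V),
    symmetric e -> irreflexive e -> (forall u v : V, connect e u v) ->
    forall n : nat, 2 <= n ->
      exists A : algorithm n V, solves_GAA_1resilient e A.
Proof.
move=> V e esym _ Hcon [|[|m]] // _.
have [sp sp_shortest] := shortest_path_fun Hcon.
by exists (Alg sp m); apply: Alg_solves.
Qed.
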